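(* Let $\mathcal{A}=\langle L,\mathcal{X},E\rangle$ be a timed automaton with $n$ clocks and $\ell_0,\ell\in L$. Then $$\{\nu\in\mathbb{R}_{\ge0}^{\mathcal{X}}: \text{there is a run of }\mathcal{A}\text{ from }\langle\ell_0,\mathbf{0}\rangle\text{ to }\langle\ell,\nu\rangle\}=\bigcup_{Z\in\mathcal{Z}_1(\mathcal{X})}\ \bigcup_{\gamma\subseteq\mathcal{X}}\{\upsilon+\mu:\mu\in Z,\ \upsilon\in\mathbb{N}^{\mathcal{X}},\ \langle\ell_0,\mathbf{0},\{\mathbf{0}\},\gamma\rangle\to^*\langle\ell,\upsilon,Z,\emptyset\rangle\text{ in }R(\mathcal{A})\},$$ where $\to^*$ denotes existence of a run of $R(\mathcal{A})$ (on any word).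
   Context: Let $\mathcal{X}$ be a finite set of clocks. Clock constraints $\Phi(\mathcal{X})$ are generated by $\varphi ::= \mathbf{true}\mid x<k\mid x=k\mid x>k\mid \varphi\wedge\varphi$ with $k\in\mathbb{N}$, $x\in\mathcal{X}$. A clock valuation is a map $\nu:\mathcal{X}\to\mathbb{R}_{\ge0}$; $\nu\models\varphi$ denotes satisfaction; $\mathbf{0}$ is the all-zero valuation; $(\nu+t)(x)=\nu(x)+t$ for $t\ge0$; for $\lambda\subseteq\mathcal{X}$, $\nu[\lambda\leftarrow0]$ sets clocks in $\lambda$ to $0$ and leaves others unchanged. A timed automaton is $\mathcal{A}=\langle L,\mathcal{X},E\rangle$ with finite location set $L$, finite clock set $\mathcal{X}$, and edges $E\subseteq L\times\Phi(\mathcal{X})\times2^{\mathcal{X}}\times L$. A configuration is a pair $\langle\ell,\nu\rangle$. Transitions: delay $\langle\ell,\nu\rangle\xrightarrow{d}\langle\ell,\nu+d\rangle$ for $d\ge0$; discrete $\langle\ell,\nu\rangle\xrightarrow{0}\langle\ell',\nu[\lambda\leftarrow0]\rangle$ whenever $\langle\ell,\varphi,\lambda,\ell'\rangle\in E$ and $\nu\models\varphi$. A run is a finite (possibly empty) sequence of consecutive transitions. A 1-bounded zone is a subset of $[0,1]^{\mathcal{X}}$ defined by a finite conjunction of constraints $x_i\bowtie c$ and $x_i-x_j\bowtie c$ with $c\in\{-1,0,1\}$ and $\bowtie\in\{<,\le,=,\ge,>\}$; $\mathcal{Z}_1(\mathcal{X})$ is the (finite) set of 1-bounded zones. For a set $Z$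 of valuations, $Z[\lambda\leftarrow0]=\{\nu[\lambda\leftarrow0]:\nu\in Z\}$ and $\overrightarrow{Z}=\{\nu+t:\nu\in Z,t\ge0\}\cap[0,1]^{\mathcal{X}}$; $[\![x=1]\!]$ is the set of valuations with $x=1$; for $\upsilon\in\mathbb{N}^{\mathcal{X}}$, $\upsilon[x\leftarrow x+1]$ increments coordinate $x$ by one. The automaton $R(\mathcal{A})$ is the (infinite-state, nondeterministic, with $\varepsilon$-transitions) automaton over alphabet $\mathcal{X}$ with states $Q=L\times\mathbb{N}^{\mathcal{X}}\times\mathcal{Z}_1(\mathcal{X})\times2^{\mathcal{X}}$ and transitions: (1) delay: $\langle\ell,\upsilon,Z,\gamma\rangle\xrightarrow{\varepsilon}\langle\ell,\upsilon,\overrightarrow{Z},\gamma\rangle$; (2) wrapping, for each $x\in\mathcal{X}$: $\langle\ell,\upsilon,Z,\gamma\rangle\xrightarrow{\sigma}\langle\ell,\upsilon[x\leftarrow x+1],(Z\cap[\![x=1]\!])[x\leftarrow0],\gamma\rangle$, where $\sigma=\varepsilon$ if $x\in\gamma$ and $\sigma=x$ otherwise; (3) for each edge $\langle\ell,\varphi,\lambda,\ell'\rangle\in E$ and each $\gamma'$ with $\gamma'\cup\lambda=\gamma$: $\langle\ell,\upsilon,Z,\gamma\rangle\xrightarrow{\varepsilon}\langle\ell',\upsilon[\lambda\leftarrow0],\{\nu\in Z:\upsilon+\nu\models\varphi\}[\lambda\leftarrow0],\gamma'\rangle$. *)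

From mathcomp Require Import all_boot.
From Stdlib Require Import Reals ZArith.
From Stdlib Require List.
From Stdlib Require Import Relations.

Set Implicit Arguments.
Unset Strict Implicit.
Unset Printing Implicit Defensive.

Section TA.
Variable X : finType.
Variable L : finType.

Definition valuation := X -> R.
Definition val_nonneg (nu : valuation) : Prop := forall x, (0 <= nu x)%R.
Definition val0 : valuation := fun _ => 0%R.
Definition vdelay (nu : valuation) (t : R) : valuation := fun x => (nu x + t)%R.
Definition vreset (nu : valuation) (lam : {set X}) : valuation :=
  fun x => if x \in lam then 0%R else nu x.

Inductive guard : Type :=
| GTrue
| GLt of X & nat
| GEq of X & nat
| GGt of X & nat
| GAnd of guard & guard.

Fixpoint gsat (g : guard) (nu : valuation) : Prop :=
  match g with
  | GTrue => True
  | GLt x k => (nu x < INR k)%R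
  | GEq x k => nu x = INR k
  | GGt x k => (nu x > INR k)%R
  | GAnd g1 g2 => gsat g1 nu /\ gsat g2 nu
  end.

Definition edge := (L * guard * {set X} * L)%type.
Definition timed_automaton := list edge.

Inductive ta_step (A : timed_automaton) : L * valuation -> L * valuation -> Prop :=
| TA_delay l nu d : (0 <= d)%R -> ta_step A (l, nu) (l, vdelay nu d)
| TA_edge l g lam l' nu :
    List.In (l, g, lam, l') A -> gsat g nu -> ta_step A (l, nu) (l', vreset nu lam).

Definition ta_reach (A : timed_automaton) := clos_refl_trans _ (ta_step A).

Inductive cmp := CLt | CLe | CEq | CGe | CGt.
Definition cmpR (o : cmp) (a b : R) : Prop :=
  match o with
  | CLt => (a < b)%R | CLe => (a <= b)%R | CEq => a = b
  | CGe => (a >= b)%R | CGt => (a > b)%R end.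

Inductive zcons : Type :=
| ZC1 of X & cmp & Z
| ZC2 of X & X & cmp & Z.

Definition zcons_ok (c : zcons) : Prop :=
  match c with
  | ZC1 _ _ k | ZC2 _ _ _ k => (-1 <= k <= 1)%Z end.

Definition zsat (c : zcons) (nu : valuation) : Prop :=
  match c with
  | ZC1 x o k => cmpR o (nu x) (IZR k)
  | ZC2 x y o k => cmpR o (nu x - nu y)%R (IZR k)
  end.

Definition in_unit (nu : valuation) : Prop := forall x, (0 <= nu x <= 1)%R.

Definition is_zone1 (Zn : valuation -> Prop) : Prop :=
  exists cs : list zcons,
    (forall c, List.In c cs -> zcons_ok c) /\
    (forall nu, Zn nu <-> (in_unit nu /\ forall c, List.In c cs -> zsat c nu)).

Definition set_eq (A B : valuation -> Prop) : Prop := forall nu, A nu <-> B nu.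

Definition ivec := X -> nat.
Definition ivec0 : ivec := fun _ => 0%nat.
Definition iincr (u : ivec) (x : X) : ivec := fun y => if y == x then S (u y) else u y.
Definition ireset (u : ivec) (lam : {set X}) : ivec := fun y => if y \in lam then 0%nat else u y.
Definition iplus (u : ivec) (nu : valuation) : valuation := fun x => (INR (u x) + nu x)%R.

Record rstate := RState {
  rs_loc : L; rs_int : ivec; rs_zone : valuation -> Prop; rs_gam : {set X} }.

Definition zero_zone : valuation -> Prop := fun nu => forall x, nu x = 0%R.

Definition future (Zn : valuation -> Prop) : valuation -> Prop :=
  fun nu => in_unit nu /\ exists nu0 t, Zn nu0 /\ (0 <= t)%R /\ forall x, nu x = (nu0 x + t)%R.

Definition wrap (Zn : valuation -> Prop) (x : X) : valuation -> Prop :=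
  fun nu => exists nu0, Zn nu0 /\ nu0 x = 1%R /\ forall y, nu y = vreset nu0 [set x] y.

Definition guard_reset (Zn : valuation -> Prop) (u : ivec) (g : guard) (lam : {set X})
  : valuation -> Prop :=
  fun nu => exists nu0, Zn nu0 /\ gsat g (iplus u nu0) /\ forall y, nu y = vreset nu0 lam y.

(* labels: None = epsilon, Some x = letter x. Zones are sets of valuations, so
   the target zone is any (1-bounded zone) predicate extensionally equal to the
   computed set. *)
Inductive r_step (A : timed_automaton) : rstate -> option X -> rstate -> Prop :=
| R_delay l u Zn g Zn' :
    is_zone1 Zn' -> set_eq Zn' (future Zn) ->
    r_step A (RState l u Zn g) None (RState l u Zn' g)
| R_wrap l u Zn g x Zn' :
    is_zone1 Zn' -> set_eq Zn' (wrap Zn x) ->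
    r_step A (RState l u Zn g) (if x \in g then None else Some x)
             (RState l (iincr u x) Zn' g)
| R_edge l u Zn g phi lam l' g' Zn' :
    List.In (l, phi, lam, l') A -> g' :|: lam = g ->
    is_zone1 Zn' -> set_eq Zn' (guard_reset Zn u phi lam) ->
    r_step A (RState l u Zn g) None (RState l' (ireset u lam) Zn' g').

Definition r_reach (A : timed_automaton) : rstate -> rstate -> Prop :=
  clos_refl_trans _ (fun s t => exists a, r_step A s a t).

End TA.

(* A valuation is an integer vector plus a point of [[0,1]^X]; [R(A)] keeps the
   integer vector explicitly and the fractional part symbolically as a 1-bounded
   zone.  A delay of [A] is simulated by letting time pass until the largest
   fractional part reaches 1 and wrapping that clock, as often as needed, so
   every run of [A] is covered by a run of [R(A)]; conversely the points of the
   zones along a run of [R(A)] trace a run of [A].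
   What makes [R(A)] well defined is that nonempty 1-bounded zones are closed
   under future, wrapping, guards and resets.  Inside [[0,1]^X] they are exactly
   the nonempty sets definable by difference constraints with arbitrary integer
   bounds, since bounds of absolute value at least 2 are vacuous or
   contradictory there; and difference constraints are closed under projection,
   by Fourier-Motzkin elimination. *)

From mathcomp Require Import all_boot.
From Stdlib Require Import Reals Lra Lia FunctionalExtensionality Relations.
From Stdlib Require List.

Set Implicit Arguments.
Unset Strict Implicit.
Unset Printing Implicit Defensive.
Local Open Scope R_scope.

(** * Choosing a real between finitely many bounds *)

Lemma exists_In_least (T : Type) (D : T -> T -> Prop) :
  (forall x, D x x) -> (forall x y z, D x y -> D y z -> D x z) ->
  (forall x y, D x y \/ D y x) ->
  forall (s : list T) x0, List.In x0 s ->
  exists m, List.In m s /\ forall p, List.In p s -> D m p.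
Proof.
move=> Drefl Dtrans Dtotal; elim=> [|x s IH] x0 //= _.
case: s IH => [|y s] IH; first by exists x; split; [left|move=> p [<-|[]]].
have [m [s_m m_least]] := IH y (or_introl erefl).
case: (Dtotal x m) => [Dxm|Dmx].
- exists x; split; first by left.
  by move=> p [<-|s_p]; [apply: Drefl|apply: Dtrans Dxm (m_least p s_p)].
- exists m; split; first by right.
  by move=> p [<-|s_p]; [apply: Dmx|apply: m_least].
Qed.

(* A bound is a pair (b, strict): [r] must lie strictly or weakly beyond [b]. *)
Definition above (p : R * bool) (r : R) := if p.2 then p.1 < r else p.1 <= r.
Definition below (q : R * bool) (r : R) := if q.2 then r < q.1 else r <= q.1.
Definition bounds_compatible (p q : R * bool) :=
  if p.2 || q.2 then p.1 < q.1 else p.1 <= q.1.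

Lemma exists_between (lo up : list (R * bool)) :
  (forall p q, List.In p lo -> List.In q up -> bounds_compatible p q) ->
  exists r, (forall p, List.In p lo -> above p r) /\
            (forall q, List.In q up -> below q r).
Proof.
move=> compat.
have least_lo : forall x0, List.In x0 lo -> exists m, List.In m lo /\
    forall p, List.In p lo -> forall r, above m r -> above p r.
  apply: exists_In_least => [p r //|p q t Hpq Hqt r /Hpq/Hqt //|[a s] [b t]].
  rewrite /above /=; case: (Rtotal_order a b) => [Hab|[->|Hab]].
  - by right => r; case: s; case: t => /=; lra.
  - by case: t; [right|left] => r; case: s => /=; lra.
  - by left => r; case: s; case: t => /=; lra.
have least_up : forall x0, List.In x0 up -> exists M, List.In M up /\
    forall q, List.In q up -> forall r, below M r -> below q r.
  apply: exists_In_least => [q r //|p q t Hpq Hqt r /Hpq/Hqt //|[a s] [b t]].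
  rewrite /below /=; case: (Rtotal_order a b) => [Hab|[->|Hab]].
  - by left => r; case: s; case: t => /=; lra.
  - by case: t; [right|left] => r; case: s => /=; lra.
  - by right => r; case: s; case: t => /=; lra.
case: lo compat least_lo => [|p0 lo] compat least_lo.
  case: up compat least_up => [|q0 up] _ least_up; first by exists 0.
  have [M [_ M_least]] := least_up q0 (or_introl erefl).
  exists (M.1 - 1); split=> // q /M_least; apply; rewrite /below; case: M.2; lra.
have [m [lo_m m_least]] := least_lo p0 (or_introl erefl).
case: up compat least_up => [|q0 up] compat least_up.
  exists (m.1 + 1); split=> // p /m_least; apply; rewrite /above; case: m.2; lra.
have [M [up_M M_least]] := least_up q0 (or_introl erefl).
have := compat m M lo_m up_M; rewrite /bounds_compatible.
move: m_least M_least {lo_m up_M compat}; case: m => a s; case: M => b t /=.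
move=> m_least M_least.
case st : (s || t) => Hab.
- exists ((a + b) / 2); split=> [p /m_least|q /M_least]; apply;
    rewrite ?/above ?/below /=; move: st {m_least M_least}; case: s; case: t => /=; lra.
- move: st => /negbT; rewrite negb_or => /andP [/negbTE s0 /negbTE t0].
  exists a; split=> [p /m_least|q /M_least]; apply;
    rewrite ?/above ?/below /= ?s0 ?t0 /=; lra.
Qed.

(** * Difference constraints and Fourier-Motzkin elimination *)

Lemma In_cat (T : Type) (x : T) (s1 s2 : seq T) :
  List.In x (s1 ++ s2) <-> List.In x s1 \/ List.In x s2.
Proof. exact: List.in_app_iff. Qed.

Section DifferenceConstraints.
Variable V : eqType.

(* [DCons i j strict k] reads [a i - a j < k] (or [<= k] when not strict). *)
Record dcons := DCons { dc_pos : V; dc_neg : V; dc_strict : bool; dc_bound : Z }.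

Definition dc_sat (a : V -> R) (c : dcons) : Prop :=
  if dc_strict c then a (dc_pos c) - a (dc_neg c) < IZR (dc_bound c)
  else a (dc_pos c) - a (dc_neg c) <= IZR (dc_bound c).

Definition dcs_sat (a : V -> R) (S : list dcons) := forall c, List.In c S -> dc_sat a c.

Definition upd (a : V -> R) (v : V) (r : R) : V -> R :=
  fun w => if w == v then r else a w.

Lemma dcs_sat_cons a c S : dcs_sat a (c :: S) <-> dc_sat a c /\ dcs_sat a S.
Proof.
split=> [H|[Hc HS] d [<-|/HS]] //.
by split=> [|d Hd]; apply: H; [left|right].
Qed.

Lemma dcs_sat_app a S1 S2 : dcs_sat a (S1 ++ S2) <-> dcs_sat a S1 /\ dcs_sat a S2.
Proof.
split=> [H|[H1 H2] c /In_cat [/H1|/H2]] //.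
by split=> c Hc; apply: H; apply/In_cat; [left|right].
Qed.

Lemma dcs_sat_ext a b S : a =1 b -> dcs_sat a S -> dcs_sat b S.
Proof. by move=> ab H c /H; rewrite /dc_sat !ab. Qed.

Definition upper_of v c := (dc_pos c == v) && (dc_neg c != v).
Definition lower_of v c := (dc_neg c == v) && (dc_pos c != v).
Definition combine (l u : dcons) :=
  DCons (dc_pos l) (dc_neg u) (dc_strict l || dc_strict u) (dc_bound l + dc_bound u).

(* A constraint on [v - v] names [v] without constraining it; it is renamed to
   the same constraint on [z - z], where [z] is any other variable. *)
Definition rename_trivial (z v : V) c :=
  if (dc_pos c == v) && (dc_neg c == v) then DCons z z (dc_strict c) (dc_bound c) else c.

Definition fm_elim (z v : V) (S : list dcons) :=
  List.map (rename_trivial z v)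
    (List.filter (fun c => ~~ upper_of v c && ~~ lower_of v c) S) ++
  List.flat_map (fun l => List.map (combine l) (List.filter (upper_of v) S))
    (List.filter (lower_of v) S).

Lemma In_fm_elim z v S c : List.In c (fm_elim z v S) ->
  (exists2 c0, List.In c0 S /\ ~~ upper_of v c0 && ~~ lower_of v c0 &
     c = rename_trivial z v c0) \/
  (exists l u, [/\ List.In l S, lower_of v l, List.In u S, upper_of v u &
     c = combine l u]).
Proof.
case/In_cat.
  by case/List.in_map_iff=> c0 [<- /List.filter_In Hc0]; left; exists c0.
case/List.in_flat_map=> l [/List.filter_In [S_l lo_l]].
by case/List.in_map_iff=> u [<- /List.filter_In [S_u up_u]]; right; exists l, u.
Qed.

Lemma fm_elim_sound z v S a r : z != v ->
  dcs_sat (upd a v r) S -> dcs_sat a (fm_elim z v S).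
Proof.
move=> zv H c /In_fm_elim [[c0 [/H + /andP[up lo]] ->]|[l [u [/H + lo_l /H + up_u ->]]]].
- case: c0 up lo => i j s k; rewrite /rename_trivial /dc_sat /upper_of /lower_of /upd /=.
  case: (i =P v) => [->|_]; case: (j =P v) => [->|_] //=; rewrite ?eqxx ?(negbTE zv) //=.
  by case: s; lra.
- move: lo_l up_u; rewrite /lower_of /upper_of /dc_sat /combine /upd /=.
  move=> /andP[/eqP-> /negbTE->] /andP[/eqP-> /negbTE->]; rewrite eqxx plus_IZR.
  by case: (dc_strict l); case: (dc_strict u) => /=; lra.
Qed.

Lemma fm_elim_complete z v S a : z != v ->
  dcs_sat a (fm_elim z v S) -> exists r, dcs_sat (upd a v r) S.
Proof.
move=> zv H.
pose lo_bound l := (a (dc_pos l) - IZR (dc_bound l), dc_strict l).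
pose up_bound u := (a (dc_neg u) + IZR (dc_bound u), dc_strict u).
have compat : forall p q,
    List.In p (List.map lo_bound (List.filter (lower_of v) S)) ->
    List.In q (List.map up_bound (List.filter (upper_of v) S)) -> bounds_compatible p q.
  move=> _ _ /List.in_map_iff [l [<- Hl]] /List.in_map_iff [u [<- Hu]].
  have : dc_sat a (combine l u).
    apply: H; apply/In_cat; right; apply/List.in_flat_map.
    by exists l; split=> //; apply: List.in_map.
  rewrite /dc_sat /bounds_compatible /combine /= plus_IZR.
  by case: (dc_strict l); case: (dc_strict u) => /=; lra.
have [r [r_above r_below]] := exists_between compat.
exists r => c S_c; rewrite /dc_sat /upd.
case up_c : (upper_of v c).
  have /r_below : List.In (up_bound c) (List.map up_bound (List.filter (upper_of v) S)).
    by apply: List.in_map; apply/List.filter_In.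
  move: up_c; rewrite /upper_of /below /= => /andP[/eqP-> /negbTE->]; rewrite eqxx.
  by case: (dc_strict c); lra.
case lo_c : (lower_of v c).
  have /r_above : List.In (lo_bound c) (List.map lo_bound (List.filter (lower_of v) S)).
    by apply: List.in_map; apply/List.filter_In.
  move: lo_c; rewrite /lower_of /above /= => /andP[/eqP-> /negbTE->]; rewrite eqxx.
  by case: (dc_strict c); lra.
have : dc_sat a (rename_trivial z v c).
  by apply: H; apply/In_cat; left; apply: List.in_map; apply/List.filter_In;
    rewrite up_c lo_c.
move: up_c lo_c {S_c}; case: c => i j s k; rewrite /rename_trivial /dc_sat /upper_of /lower_of /=.
case: (i =P v) => [->|_]; case: (j =P v) => [->|_] //=; rewrite ?eqxx /=.
by case: s; lra.
Qed.

Lemma fm_elim_vars (Q : V -> Prop) z v S : Q z ->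
  (forall c, List.In c S -> Q (dc_pos c) /\ Q (dc_neg c)) ->
  forall c, List.In c (fm_elim z v S) -> Q (dc_pos c) /\ Q (dc_neg c).
Proof.
move=> Qz QS c /In_fm_elim [[c0 [/QS Qc0 _] ->]|[l [u [/QS Ql _ /QS Qu _ ->]]]].
  by rewrite /rename_trivial; case: ifP.
by split; [apply: Ql.1|apply: Qu.2].
Qed.

Lemma fm_elim_avoids z v S : z != v ->
  forall c, List.In c (fm_elim z v S) -> dc_pos c != v /\ dc_neg c != v.
Proof.
move=> zv c /In_fm_elim [[c0 [_ /andP[up lo]] ->]|[l [u [_ lo_l _ up_u ->]]]].
  move: up lo; case: c0 => i j s k; rewrite /rename_trivial /upper_of /lower_of /=.
  case: (i =P v) => [->|/eqP ?]; case: (j =P v) => [->|/eqP ?] //=; rewrite ?eqxx //=.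
by move: lo_l up_u; rewrite /combine /lower_of /upper_of /= => /andP[_ ->] /andP[_ ->].
Qed.

End DifferenceConstraints.

(** * Sets of valuations definable by difference constraints *)

Section Definable.
Variable X : finType.

(* Variables are the clocks [clk x], the constant [None] (always 0), and one
   spare variable [aux], eliminated when computing [future]. *)
Notation V := (option (option X)).
Definition aux : V := Some None.
Definition clk (x : X) : V := Some (Some x).
Definition lift_val (mu : valuation X) : V -> R :=
  fun v => if v is Some (Some x) then mu x else 0.

Lemma clk_eq x y : (clk x == clk y) = (x == y).
Proof. by apply/eqP/eqP => [[]|->]. Qed.

Lemma In_enum x : List.In x (enum X).
Proof.
have : x \in enum X by rewrite mem_enum.
by elim: (enum X) => //= y s IH; rewrite in_cons => /orP [/eqP->|/IH]; [left|right].
Qed.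

Definition avoids_aux (S : list (dcons V)) :=
  forall c, List.In c S -> dc_pos c != aux /\ dc_neg c != aux.

Definition dc_definable (P : valuation X -> Prop) :=
  exists S, avoids_aux S /\ forall mu, P mu <-> dcs_sat (lift_val mu) S.

Lemma dc_definable_ext (P Q : valuation X -> Prop) :
  (forall mu, P mu <-> Q mu) -> dc_definable P -> dc_definable Q.
Proof. by move=> PQ [S [HS H]]; exists S; split=> // mu; rewrite -PQ. Qed.

Lemma dc_definable_true : dc_definable (fun _ => True).
Proof. by exists nil; split=> // mu; split=> // _ c []. Qed.

Lemma dc_definable_and (P Q : valuation X -> Prop) :
  dc_definable P -> dc_definable Q -> dc_definable (fun mu => P mu /\ Q mu).
Proof.
move=> [S1 [N1 H1]] [S2 [N2 H2]]; exists (S1 ++ S2); split=> [c /In_cat [/N1|/N2] //|mu].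
by rewrite dcs_sat_app H1 H2.
Qed.

Lemma dc_definable_forall_In (T : Type) (s : list T) (P : T -> valuation X -> Prop) :
  (forall t, dc_definable (P t)) ->
  dc_definable (fun mu => forall t, List.In t s -> P t mu).
Proof.
move=> HP; elim: s => [|t s IH]; first by apply: dc_definable_ext dc_definable_true.
apply: dc_definable_ext (dc_definable_and (HP t) IH) => mu /=.
by split=> [[Pt Ps] t' [<-|/Ps]|H] //; split=> [|t' Ht']; apply: H; [left|right].
Qed.

Lemma dc_definable_forall_clocks (P : X -> valuation X -> Prop) :
  (forall x, dc_definable (P x)) -> dc_definable (fun mu => forall x, P x mu).
Proof.
move=> /(dc_definable_forall_In (enum X)).
by apply: dc_definable_ext => mu; split=> H x; [apply: H (In_enum x)|].
Qed.

Definition cmp_dcons (i j : V) (o : cmp) (k : Z) : list (dcons V) :=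
  match o with
  | CLt => [:: DCons i j true k]
  | CLe => [:: DCons i j false k]
  | CEq => [:: DCons i j false k; DCons j i false (- k)]
  | CGe => [:: DCons j i false (- k)]
  | CGt => [:: DCons j i true (- k)]
  end.

Lemma cmp_dcons_sat a i j o k :
  dcs_sat a (cmp_dcons i j o k) <-> cmpR o (a i - a j) (IZR k).
Proof.
case: o; rewrite /= ?dcs_sat_cons /dc_sat /= ?opp_IZR;
  split=> [|H]; try case; try case; try (repeat split; try by move=> ? []); lra.
Qed.

Lemma dc_definable_cmp (i j : V) o k : i != aux -> j != aux ->
  dc_definable (fun mu => cmpR o (lift_val mu i - lift_val mu j) (IZR k)).
Proof.
move=> i_aux j_aux; exists (cmp_dcons i j o k); split=> [|mu]; last first.
  by rewrite cmp_dcons_sat.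
by case: o => c /=; do ?case=> [<-|]; rewrite //=.
Qed.

Lemma dc_definable_clock x o k : dc_definable (fun mu => cmpR o (mu x) (IZR k)).
Proof.
apply: dc_definable_ext (@dc_definable_cmp (clk x) None o k isT isT) => mu.
by rewrite /= Rminus_0_r.
Qed.

Lemma dc_definable_diff x y o k :
  dc_definable (fun mu => cmpR o (mu x - mu y) (IZR k)).
Proof. exact: (@dc_definable_cmp (clk x) (clk y) o k isT isT). Qed.

Lemma dc_definable_in_unit : dc_definable (@in_unit X).
Proof.
apply: dc_definable_forall_clocks => x.
apply: dc_definable_ext (dc_definable_and (dc_definable_clock x CGe 0)
                                          (dc_definable_clock x CLe 1)) => mu /=.
by split; case=> ? ?; split; lra.
Qed.

Lemma dc_definable_zero_zone : dc_definable (@zero_zone X).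
Proof. exact: dc_definable_forall_clocks (fun x => dc_definable_clock x CEq 0). Qed.

Lemma dc_definable_zone (Zn : valuation X -> Prop) : is_zone1 Zn -> dc_definable Zn.
Proof.
move=> [cs [_ Zn_cs]]; apply: dc_definable_ext (fun mu => iff_sym (Zn_cs mu)) _.
apply: dc_definable_and dc_definable_in_unit _.
apply: dc_definable_forall_In => -[x o k|x y o k].
  exact: dc_definable_clock.
exact: dc_definable_diff.
Qed.

Lemma dc_definable_guard (u : ivec X) (g : guard X) :
  dc_definable (fun mu => gsat g (iplus u mu)).
Proof.
have shift (o : cmp) x k :
    dc_definable (fun mu => cmpR o (INR (u x) + mu x) (INR k)).
  apply: dc_definable_ext (dc_definable_clock x o (Z.of_nat k - Z.of_nat (u x))) => mu.
  rewrite minus_IZR -!INR_IZR_INZ; case: o => /=; split=> ?; lra.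
elim: g => [|x k|x k|x k|g1 IH1 g2 IH2] /=.
- exact: dc_definable_true.
- exact: shift CLt x k.
- exact: shift CEq x k.
- exact: shift CGt x k.
- exact: dc_definable_and.
Qed.

Lemma dc_definable_reset1 (P : valuation X -> Prop) x : dc_definable P ->
  dc_definable (fun mu => exists nu, P nu /\ forall y, mu y = vreset nu [set x] y).
Proof.
move=> [S [S_aux PS]].
exists (cmp_dcons (clk x) None CEq 0 ++ fm_elim None (clk x) S); split=> [c|mu].
  case/In_cat => [|/(fm_elim_vars (Q := fun v => v != aux))]; last exact.
  by do ?case=> [<-|].
rewrite dcs_sat_app cmp_dcons_sat /= Rminus_0_r.
split=> [[nu [P_nu mu_nu]]|[mu_x /(@fm_elim_complete _ None (clk x) _ _ isT) [r Hr]]].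
  split; first by rewrite mu_nu /vreset in_set1 eqxx.
  apply: (fm_elim_sound (r := nu x)) => //.
  apply: dcs_sat_ext (proj1 (PS nu) P_nu) => -[[y|]|] //.
  rewrite /upd -/(clk y) clk_eq /= mu_nu /vreset in_set1.
  by case: (y =P x) => [->|].
exists (fun y => if y == x then r else mu y); split.
  by apply/PS; apply: dcs_sat_ext Hr => -[[y|]|] //; rewrite /upd -/(clk y) clk_eq.
by move=> y; rewrite /vreset in_set1; case: (y =P x) => [->|].
Qed.

Lemma dc_definable_vreset (P : valuation X -> Prop) lam : dc_definable P ->
  dc_definable (fun mu => exists nu, P nu /\ forall y, mu y = vreset nu lam y).
Proof.
move=> P_def.
have reset_seq (s : seq X) : dc_definable
    (fun mu => exists nu, P nu /\ forall y, mu y = if y \in s then 0 else nu y).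
  elim: s => [|x s IH].
    apply: dc_definable_ext P_def => mu; split=> [P_mu|[nu [P_nu mu_nu]]].
      by exists mu.
    by have -> : mu = nu by apply: functional_extensionality.
  apply: dc_definable_ext (dc_definable_reset1 x IH) => mu; split.
    move=> [nu [[nu0 [P0 nu_nu0]] mu_nu]]; exists nu0; split=> // y.
    by rewrite mu_nu /vreset nu_nu0 in_set1 in_cons; case: (y == x).
  move=> [nu0 [P0 mu_nu0]]; exists (fun y => if y \in s then 0 else nu0 y).
  split; first by exists nu0.
  by move=> y; rewrite mu_nu0 /vreset in_set1 in_cons; case: (y == x).
apply: dc_definable_ext (reset_seq (enum lam)) => mu.
by split=> -[nu [P_nu mu_nu]]; exists nu; split=> // y; rewrite mu_nu /vreset mem_enum.
Qed.

(* To delay by an unknown [t], a valuation is shifted by [-t] and [t] is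
   stored in [aux] in place of the constant 0; eliminating [aux] projects [t] away. *)
Definition aux_for_zero (v : V) : V := if v is None then aux else v.
Definition shift_dcons (c : dcons V) :=
  DCons (aux_for_zero (dc_pos c)) (aux_for_zero (dc_neg c)) (dc_strict c) (dc_bound c).

Lemma shift_dcons_sat (nu : valuation X) t c :
  dc_sat (upd (lift_val nu) aux t) (shift_dcons c) <->
  dc_sat (lift_val (fun x => nu x - t)) c.
Proof.
have shift v : upd (lift_val nu) aux t (aux_for_zero v) = lift_val (fun x => nu x - t) v + t.
  by case: v => [[x|]|]; rewrite /upd /=; lra.
case: c => i j s k; rewrite /dc_sat /= !shift.
move: (lift_val _ i) (lift_val _ j) => p q.
by case: s; split=> ?; lra.
Qed.

Lemma dc_definable_future (P : valuation X -> Prop) : dc_definable P ->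
  dc_definable (fun nu => exists nu0 t, P nu0 /\ 0 <= t /\ forall x, nu x = nu0 x + t).
Proof.
move=> [S [S_aux PS]].
exists (fm_elim None aux (DCons None aux false 0 :: List.map shift_dcons S)).
split=> [c /(@fm_elim_avoids _ None aux _ isT) [] //|nu].
split=> [[nu0 [t [P_nu0 [t_ge0 nu_nu0]]]]|H].
  apply: (fm_elim_sound (r := t)) => //; apply/dcs_sat_cons.
  split; first by rewrite /dc_sat /upd /=; lra.
  move=> _ /List.in_map_iff [c [<- S_c]]; apply/shift_dcons_sat.
  apply: (dcs_sat_ext _ (proj1 (PS nu0) P_nu0) S_c) => -[[x|]|] //=.
  by rewrite nu_nu0; lra.
have [t /dcs_sat_cons [t_ge0 Ht]] := @fm_elim_complete _ None aux _ _ isT H.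
exists (fun x => nu x - t), t; split; last split.
- by apply/PS => c S_c; apply/shift_dcons_sat; apply: Ht; apply: List.in_map.
- by move: t_ge0; rewrite /dc_sat /upd /=; lra.
- by move=> x; lra.
Qed.

(* On [[0,1]^X] every difference of values lies in [[-1,1]], so a bound [k >= 2]
   is vacuous and a bound [k <= -2] is unsatisfiable. *)
Definition zclamp (x : X) (k : Z) (zc : zcons X) : list (zcons X) :=
  if (2 <=? k)%Z then [::] else if (k <=? -2)%Z then [:: ZC1 x CLt (-1)%Z] else [:: zc].

Definition strict_cmp (s : bool) := if s then CLt else CLe.
Definition strict_cmp_rev (s : bool) := if s then CGt else CGe.

Definition zcons_of_dcons (c : dcons V) : list (zcons X) :=
  let: DCons i j s k := c in
  match i, j with
  | Some (Some x), Some (Some y) => zclamp x k (ZC2 x y (strict_cmp s) k)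
  | Some (Some x), None => zclamp x k (ZC1 x (strict_cmp s) k)
  | None, Some (Some y) => zclamp y k (ZC1 y (strict_cmp_rev s) (- k))
  | _, _ => [::]
  end.

Lemma zcons_of_dcons_ok c z : List.In z (zcons_of_dcons c) -> zcons_ok z.
Proof.
case: c => [[[x|]|] [[y|]|] s k] //=; rewrite /zclamp;
  case: (Z.leb_spec 2 k) => // ?; case: (Z.leb_spec k (-2)) => ? [<-|[]] /=; lia.
Qed.

Lemma zclamp_sat mu x k zc s (d : R) : in_unit mu -> -1 <= d <= 1 ->
  (zsat zc mu <-> (if s then d < IZR k else d <= IZR k)) ->
  ((if s then d < IZR k else d <= IZR k) <->
   forall z, List.In z (zclamp x k zc) -> zsat z mu).
Proof.
move=> mu_unit d_bd zc_d; have := mu_unit x; rewrite /zclamp.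
case: (Z.leb_spec 2 k) => [/(IZR_le 2) k_ge2|_] x_bd.
  by split=> // _; case: s {zc_d}; lra.
case: (Z.leb_spec k (-2)) => [/(IZR_le _ (-2)) k_le|_]; last first.
  by rewrite -zc_d; split=> [? z [<-|[]]|H] //; apply: H; left.
by split=> [|/(_ _ (or_introl erefl)) /=]; case: s {zc_d}; lra.
Qed.

Lemma zcons_of_dcons_sat mu c : in_unit mu -> dc_pos c != aux -> dc_neg c != aux ->
  (dc_pos c, dc_neg c) <> (None, None) ->
  (dc_sat (lift_val mu) c <-> forall z, List.In z (zcons_of_dcons c) -> zsat z mu).
Proof.
move=> mu_unit; case: c => [[[x|]|] [[y|]|] s k] //= _ _ _; rewrite /dc_sat /=.
- have := mu_unit x; have := mu_unit y => ? ?.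
  by apply: zclamp_sat => //; [lra|case: s].
- have := mu_unit x => ?.
  by apply: zclamp_sat => //; [lra|case: s => /=; lra].
- have := mu_unit y => ?.
  by apply: zclamp_sat => //; [lra|rewrite /= opp_IZR; case: s => /=; split=> ?; lra].
Qed.

Lemma zone_of_dc_definable (Zn : valuation X -> Prop) :
  dc_definable Zn -> (forall mu, Zn mu -> in_unit mu) -> (exists mu, Zn mu) ->
  is_zone1 Zn.
Proof.
move=> [S [S_aux ZnS]] Zn_unit [mu0 Zn_mu0].
exists (List.flat_map zcons_of_dcons S); split.
  by move=> z /List.in_flat_map [c [_ /zcons_of_dcons_ok]].
(* constraints between the constant 0 and itself hold everywhere as soon as [Zn]
   is nonempty, so dropping them is harmless *)
have const_sat mu c : List.In c S -> (dc_pos c, dc_neg c) = (None, None) ->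
    dc_sat (lift_val mu) c.
  move=> S_c; have := proj1 (ZnS mu0) Zn_mu0 c S_c.
  by case: c {S_c} => i j s k /= + [Ei Ej]; rewrite /dc_sat /= Ei Ej.
move=> mu; rewrite ZnS; split=> [H|[mu_unit H]].
  have mu_unit : in_unit mu by apply: Zn_unit; apply/ZnS.
  split=> // z /List.in_flat_map [c [S_c c_z]]; have [Na Nb] := S_aux c S_c.
  case: (boolP ((dc_pos c, dc_neg c) == (None, None))) => [/eqP E|/eqP NN].
    by case: c E c_z {S_c Na Nb} => i j s k /= [Ei Ej]; rewrite Ei Ej.
  exact: (proj1 (zcons_of_dcons_sat mu_unit Na Nb NN) (H c S_c) z c_z).
move=> c S_c; have [Na Nb] := S_aux c S_c.
case: (boolP ((dc_pos c, dc_neg c) == (None, None))) => [/eqP|/eqP NN]; first exact: const_sat.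
apply/(zcons_of_dcons_sat mu_unit Na Nb NN) => z c_z.
by apply: H; apply/List.in_flat_map; exists c.
Qed.

(** * Closure of 1-bounded zones under the operations of [R(A)] *)

Lemma zone1_in_unit (Zn : valuation X -> Prop) mu : is_zone1 Zn -> Zn mu -> in_unit mu.
Proof. by move=> [cs [_ Zn_cs]] /Zn_cs []. Qed.

Lemma zone1_zero : is_zone1 (@zero_zone X).
Proof.
apply: zone_of_dc_definable dc_definable_zero_zone _ _; last by exists (@val0 X).
by move=> mu mu0 x; rewrite mu0; lra.
Qed.

Lemma zone1_future (Zn : valuation X -> Prop) :
  is_zone1 Zn -> (exists nu, future Zn nu) -> is_zone1 (future Zn).
Proof.
move=> Zn1; apply: zone_of_dc_definable; last by move=> mu [].
exact: dc_definable_and dc_definable_in_unit (dc_definable_future (dc_definable_zone Zn1)).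
Qed.

Lemma in_unit_vreset (nu : valuation X) lam : in_unit nu -> in_unit (vreset nu lam).
Proof. by move=> nu_unit y; rewrite /vreset; case: (y \in lam) => //; lra. Qed.

Lemma zone1_restrict_reset (Zn Q : valuation X -> Prop) lam :
  is_zone1 Zn -> dc_definable Q ->
  let Zn' := fun nu => exists nu0, Zn nu0 /\ Q nu0 /\ forall y, nu y = vreset nu0 lam y in
  (exists nu, Zn' nu) -> is_zone1 Zn'.
Proof.
move=> Zn1 Q_def Zn'; apply: zone_of_dc_definable.
  apply: dc_definable_ext (dc_definable_vreset lam
    (dc_definable_and (dc_definable_zone Zn1) Q_def)) => mu.
  by split=> -[nu0 H]; exists nu0; tauto.
move=> mu [nu0 [Zn_nu0 [_ mu_nu0]]] y; rewrite mu_nu0.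
exact: in_unit_vreset (zone1_in_unit Zn1 Zn_nu0) y.
Qed.

Lemma zone1_guard_reset (Zn : valuation X -> Prop) u g lam :
  is_zone1 Zn -> (exists nu, guard_reset Zn u g lam nu) ->
  is_zone1 (guard_reset Zn u g lam).
Proof. by move=> Zn1; apply: zone1_restrict_reset Zn1 (dc_definable_guard u g). Qed.

Lemma zone1_wrap (Zn : valuation X -> Prop) x :
  is_zone1 Zn -> (exists nu, wrap Zn x nu) -> is_zone1 (wrap Zn x).
Proof. by move=> Zn1; apply: zone1_restrict_reset Zn1 (dc_definable_clock x CEq 1). Qed.

End Definable.

(** * Simulation between [A] and [R(A)] *)

Section Simulation.
Variables (X L : finType) (A : timed_automaton X L).

Lemma r_reach_sound l0 gam s :
  r_reach A (RState l0 (@ivec0 X) (@zero_zone X) gam) s ->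
  forall mu nu, rs_zone s mu -> (forall x, nu x = iplus (rs_int s) mu x) ->
  ta_reach A (l0, @val0 X) (rs_loc s, nu).
Proof.
move=> reach; elim: (clos_rt_rtn1 _ _ _ _ reach) => [|s1 s2 [a step] _ IH] mu nu /=.
  move=> mu0 nu_mu; have -> : nu = @val0 X.
    by apply: functional_extensionality => x; rewrite nu_mu /iplus mu0 /val0 /=; lra.
  exact: rt_refl.
case: step IH => {s1 s2} [l u Zn g Zn' _ E|l u Zn g x Zn' _ E|l u Zn g phi lam l' g' Zn' e_A _ _ E]
  IH /= /E.
- move=> [_ [mu0 [t [Zn_mu0 [t_ge0 mu_mu0]]]]] nu_mu.
  apply: rt_trans (IH mu0 (iplus u mu0) Zn_mu0 (fun _ => erefl)) _.
  have -> : nu = vdelay (iplus u mu0) t.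
    by apply: functional_extensionality => y; rewrite nu_mu /vdelay /iplus mu_mu0; lra.
  exact/rt_step/TA_delay.
- move=> [mu0 [Zn_mu0 [mu0_x mu_mu0]]] nu_mu; apply: (IH mu0) => // y.
  rewrite (nu_mu y) /iplus (mu_mu0 y) /vreset /iincr in_set1 /=.
  by case: (y =P x) => [->|_] //; rewrite S_INR mu0_x; lra.
- move=> [mu0 [Zn_mu0 [sat_phi mu_mu0]]] nu_mu.
  apply: rt_trans (IH mu0 (iplus u mu0) Zn_mu0 (fun _ => erefl)) _.
  have -> : nu = vreset (iplus u mu0) lam.
    apply: functional_extensionality => y; rewrite nu_mu /iplus mu_mu0 /vreset /ireset.
    by case: (y \in lam) => /=; lra.
  exact/rt_step/(TA_edge e_A sat_phi).
Qed.


Definition covered (s0 : rstate X L) (l : L) (gam : {set X}) (nu : valuation X) :=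
  exists u Zn mu, [/\ is_zone1 Zn, Zn mu, (forall x, nu x = iplus u mu x) &
                      r_reach A s0 (RState l u Zn gam)].

Lemma r_reach_step s0 s1 a s2 : r_reach A s0 s1 -> r_step A s1 a s2 -> r_reach A s0 s2.
Proof. by move=> reach1 step; apply: rt_trans reach1 (rt_step _ _ _ _ (ex_intro _ a step)). Qed.

Lemma covered_delay_in_unit s0 l gam u Zn mu d :
  is_zone1 Zn -> Zn mu -> r_reach A s0 (RState l u Zn gam) ->
  0 <= d -> (forall x, mu x + d <= 1) ->
  [/\ is_zone1 (future Zn), future Zn (fun x => mu x + d) &
      r_reach A s0 (RState l u (future Zn) gam)].
Proof.
move=> Zn1 Zn_mu reach d_ge0 mu_d_le1.
have mu_d : future Zn (fun x => mu x + d).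
  split; last by exists mu, d.
  by move=> x; have := zone1_in_unit Zn1 Zn_mu x; have := mu_d_le1 x; lra.
have F1 := zone1_future Zn1 (ex_intro _ _ mu_d).
by split=> //; apply: r_reach_step reach (R_delay A l u gam F1 (fun _ => iff_refl _)).
Qed.

(* Delay until the largest fractional part [mu m] reaches 1, then wrap [m]. *)
Lemma covered_wrap_max s0 l gam u Zn mu m :
  is_zone1 Zn -> Zn mu -> r_reach A s0 (RState l u Zn gam) ->
  (forall x, mu x <= mu m) ->
  let mu' := vreset (fun x => mu x + (1 - mu m)) [set m] in
  [/\ is_zone1 (wrap (future Zn) m), wrap (future Zn) m mu' &
      r_reach A s0 (RState l (iincr u m) (wrap (future Zn) m) gam)].
Proof.
move=> Zn1 Zn_mu reach mu_le mu'.
have mu_m_unit := zone1_in_unit Zn1 Zn_mu m.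
have [F1 F_mu reach1] := covered_delay_in_unit Zn1 Zn_mu reach
  (ltac:(lra) : 0 <= 1 - mu m) (fun x => ltac:(have := mu_le x; lra)).
have W_mu' : wrap (future Zn) m mu'.
  by exists (fun x => mu x + (1 - mu m)); split=> //; split=> //=; lra.
have W1 := zone1_wrap F1 (ex_intro _ _ W_mu').
by split=> //; apply: r_reach_step reach1 (R_wrap A l u gam W1 (fun _ => iff_refl _)).
Qed.

Lemma covered_ext s0 l gam (nu nu' : valuation X) :
  nu =1 nu' -> covered s0 l gam nu -> covered s0 l gam nu'.
Proof. by move=> E [u [Zn [mu [? ? nu_mu ?]]]]; exists u, Zn, mu; split=> // x; rewrite -E. Qed.

Lemma iplus_wrap u (mu : valuation X) m e : mu m + e = 1 ->
  iplus (iincr u m) (vreset (fun x => mu x + e) [set m]) =1 vdelay (iplus u mu) e.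
Proof.
move=> mu_m x; rewrite /iplus /vdelay /iincr /vreset in_set1.
by case: (x =P m) => [->|_]; rewrite ?S_INR; lra.
Qed.

Lemma exists_max_clock (mu : valuation X) (x0 : X) : exists m, forall x, mu x <= mu m.
Proof.
have total x y : mu y <= mu x \/ mu x <= mu y by case: (Rle_or_lt (mu y) (mu x)); lra.
have [m [_ m_max]] := @exists_In_least _ (fun a b => mu b <= mu a)
  (fun x => Rle_refl _) (fun x y z H1 H2 => Rle_trans _ _ _ H2 H1) total
  (enum X) x0 (In_enum x0).
by exists m => x; apply: m_max; apply: In_enum.
Qed.

Definition Rltb (a b : R) : bool := if Rlt_dec a b then true else false.

Lemma RltbP a b : reflect (a < b) (Rltb a b).
Proof. by rewrite /Rltb; case: Rlt_dec => H; constructor. Qed.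

(* Induction on the number of clocks whose fractional part overflows during the delay;
   each wrap of the largest one removes it from that set. *)
Lemma covered_delay_le1 s0 l gam n : forall u Zn mu d,
  is_zone1 Zn -> Zn mu -> r_reach A s0 (RState l u Zn gam) -> 0 <= d <= 1 ->
  #|[set x | Rltb 1 (mu x + d)]| = n ->
  covered s0 l gam (vdelay (iplus u mu) d).
Proof.
elim: n => [|n IH] u Zn mu d Zn1 Zn_mu reach d_bd overflow.
  have mu_d_le1 x : mu x + d <= 1.
    case: (Rle_lt_dec (mu x + d) 1) => // /RltbP over.
    by move/eqP: overflow; rewrite cards_eq0 => /eqP/setP/(_ x); rewrite !inE over.
  have [F1 F_mu reach'] := covered_delay_in_unit Zn1 Zn_mu reach (proj1 d_bd) mu_d_le1.
  by exists u, (future Zn), (fun x => mu x + d); split=> // x; rewrite /vdelay /iplus; lra.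
have [y0] : exists y0, y0 \in [set x | Rltb 1 (mu x + d)].
  by apply/set0Pn; rewrite -card_gt0 overflow.
rewrite inE => /RltbP y0_over.
have [m mu_le] := exists_max_clock mu y0.
have m_over : 1 < mu m + d by have := mu_le y0; lra.
have mu_m_unit := zone1_in_unit Zn1 Zn_mu m.
have [W1 W_mu' reach'] := covered_wrap_max Zn1 Zn_mu reach mu_le.
set mu' := vreset _ [set m] in W_mu'.
apply: (covered_ext (nu := vdelay (iplus (iincr u m) mu') (d - (1 - mu m)))).
  by move=> x; rewrite /vdelay (iplus_wrap _ (ltac:(lra) : mu m + (1 - mu m) = 1)) /vdelay; lra.
apply: (IH _ _ _ (d - (1 - mu m)) W1 W_mu' reach'); first lra.
have m_in : m \in [set x | Rltb 1 (mu x + d)] by rewrite inE; apply/RltbP.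
move: overflow; rewrite (cardsD1 m) m_in => -[<-]; apply: eq_card => x.
rewrite !inE /mu' /vreset in_set1; case: (x =P m) => [->|_] /=.
  by apply/negbTE/RltbP; lra.
by congr Rltb; lra.
Qed.

Lemma covered_delay_unit s0 l gam (nu : valuation X) d :
  covered s0 l gam nu -> 0 <= d <= 1 -> covered s0 l gam (vdelay nu d).
Proof.
move=> [u [Zn [mu [Zn1 Zn_mu nu_mu reach]]]] d_bd.
apply: (covered_ext _ (covered_delay_le1 Zn1 Zn_mu reach d_bd erefl)).
by move=> x; rewrite /vdelay nu_mu.
Qed.

Lemma covered_delay s0 l gam (nu : valuation X) d :
  covered s0 l gam nu -> 0 <= d -> covered s0 l gam (vdelay nu d).
Proof.
have [N /Rlt_le] := INR_unbounded d.
elim: N d nu => [|N IH] d nu d_le cov d_ge0.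
  by apply: covered_delay_unit cov _; simpl in d_le; lra.
case: (Rle_lt_dec d 1) => [d_le1|d_gt1]; first exact: covered_delay_unit.
have cov1 := covered_delay_unit cov (ltac:(lra) : 0 <= 1 <= 1).
apply: (covered_ext _ (IH (d - 1) _ _ cov1 _)); last 2 first.
- by rewrite S_INR in d_le; lra.
- by lra.
by move=> x; rewrite /vdelay; lra.
Qed.

Lemma gsat_ext (g : guard X) (a b : valuation X) : a =1 b -> gsat g a -> gsat g b.
Proof. by move=> E; elim: g => //= [x k|x k|x k|g1 IH1 g2 IH2]; rewrite ?E //; tauto. Qed.

Lemma covered_edge s0 l phi lam l' gam (nu : valuation X) :
  List.In (l, phi, lam, l') A -> gsat phi nu ->
  covered s0 l (gam :|: lam) nu -> covered s0 l' gam (vreset nu lam).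
Proof.
move=> e_A sat_phi [u [Zn [mu [Zn1 Zn_mu nu_mu reach]]]].
have G_mu : guard_reset Zn u phi lam (vreset mu lam).
  by exists mu; split=> //; split=> //; apply: gsat_ext sat_phi.
have G1 := zone1_guard_reset Zn1 (ex_intro _ _ G_mu).
exists (ireset u lam), (guard_reset Zn u phi lam), (vreset mu lam); split=> //.
  by move=> x; rewrite /vreset nu_mu /ireset /iplus; case: (x \in lam) => /=; lra.
exact: r_reach_step reach (R_edge e_A erefl G1 (fun _ => iff_refl _)).
Qed.

Lemma ta_reach_complete l0 s : ta_reach A (l0, @val0 X) s -> forall gam,
  exists gam0, covered (RState l0 (@ivec0 X) (@zero_zone X) gam0) s.1 gam s.2.
Proof.
move=> reach; elim: (clos_rt_rtn1 _ _ _ _ reach) => [|s1 s2 step _ IH] gam.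
  exists gam, (@ivec0 X), (@zero_zone X), (@val0 X).
  split=> //; [exact: zone1_zero| |exact: rt_refl].
  by move=> x; rewrite /iplus /val0 /ivec0 /=; lra.
case: step IH => {s1 s2} [l nu d d_ge0|l phi lam l' nu e_A sat_phi] IH.
  by have [gam0 cov] := IH gam; exists gam0; apply: covered_delay.
by have [gam0 cov] := IH (gam :|: lam); exists gam0; apply: covered_edge e_A sat_phi cov.
Qed.

End Simulation.

Theorem mainTheorem7 (X : finType) (L : finType) (A : timed_automaton X L) (l0 l : L)
  (nu : X -> R) :
  (val_nonneg nu /\ ta_reach A (l0, @val0 X) (l, nu)) <->
  (exists Zn : (X -> R) -> Prop, is_zone1 Zn /\
     exists (gam : {set X}) (mu : X -> R) (u : X -> nat),
       Zn mu /\ (forall x, nu x = iplus u mu x) /\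
       r_reach A (RState l0 (@ivec0 X) (@zero_zone X) gam) (RState l u Zn set0)).
Proof.
split=> [[_ /ta_reach_complete /(_ set0) [gam [u [Zn [mu [Zn1 Zn_mu nu_mu reach]]]]]]|].
  by exists Zn; split=> //; exists gam, mu, u.
move=> [Zn [Zn1 [gam [mu [u [Zn_mu [nu_mu reach]]]]]]]; split.
  move=> x; rewrite nu_mu /iplus.
  by have := zone1_in_unit Zn1 Zn_mu x; have := pos_INR (u x); lra.
exact: (r_reach_sound reach Zn_mu nu_mu).
Qed.
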